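(* Let $H$ be a digraph and let $\widehat{H}\supseteq H$ be a strongly connected digraph. Then there exists $H^*\in GPC(H)$ such that $H^*\subseteq\widehat{H}$.
   Context: $D_1\cup D_2$ denotes the digraph with vertex set $V(D_1)\cup V(D_2)$ and arc set $A(D_1)\cup A(D_2)$. The path completions $PC(H)$ of $H$ are the strongly connected digraphs of the form $H^*=H\cup P_1\cup\dots\cup P_\ell$ where each $P_i$ is a directed path whose two end-points lie in $V(H)$ (the paths need not be vertex-disjoint from each other or from $H$); $\{P_1,\dots,P_\ell\}$ is a witnessing collection of paths. The good path completions $GPC(H)\subseteq PC(H)$ are those $H^*\in PC(H)$ admitting such a representation in which the ordered pairs of end-points of the paths $P_i$ are pairwise distinct (so $\ell\le|V(H)|^2$). *)

From mathcomp Require Import all_boot.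
Set Implicit Arguments. Unset Strict Implicit. Unset Printing Implicit Defensive.

Definition digraph (T : finType) := ({set T} * {set T * T})%type.

Section Digraphs.
Variable T : finType.

Definition V (D : digraph T) : {set T} := D.1.
Definition A (D : digraph T) : {set T * T} := D.2.

Definition wf_digraph (D : digraph T) : Prop :=
  forall a, a \in A D -> a.1 \in V D /\ a.2 \in V D.

Definition arcrel (D : digraph T) : rel T := fun x y => (x, y) \in A D.

Definition strongly_connected (D : digraph T) : Prop :=
  forall u v, u \in V D -> v \in V D -> connect (arcrel D) u v.

Definition subdigraph (D1 D2 : digraph T) : Prop :=
  V D1 \subset V D2 /\ A D1 \subset A D2.

Definition dunion (D1 D2 : digraph T) : digraph T :=
  (V D1 :|: V D2, A D1 :|: A D2).

(* A directed path x = v0 -> v1 -> ... -> vk, encoded by its start x and the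
   sequence p = [v1; ...; vk] of the remaining vertices (pairwise distinct). *)
Definition dipath := (T * seq T)%type.

Definition is_dipath (P : dipath) : bool := uniq (P.1 :: P.2).

Definition dipath_graph (P : dipath) : digraph T :=
  ([set v in P.1 :: P.2], [set e in zip (P.1 :: P.2) P.2]).

Definition dipath_ends (P : dipath) : T * T := (P.1, last P.1 P.2).

Definition completion (H : digraph T) (Ps : seq dipath) : digraph T :=
  foldr (fun P D => dunion D (dipath_graph P)) H Ps.

Definition PC (H Hs : digraph T) : Prop :=
  strongly_connected Hs /\
  exists Ps : seq dipath,
    [/\ all is_dipath Ps,
        (forall P, P \in Ps -> (dipath_ends P).1 \in V H /\ (dipath_ends P).2 \in V H)
      & Hs = completion H Ps].

Definition GPC (H Hs : digraph T) : Prop :=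
  strongly_connected Hs /\
  exists Ps : seq dipath,
    [/\ all is_dipath Ps,
        (forall P, P \in Ps -> (dipath_ends P).1 \in V H /\ (dipath_ends P).2 \in V H),
        uniq (map dipath_ends Ps)
      & Hs = completion H Ps].

End Digraphs.

From mathcomp Require Import all_boot.
Set Implicit Arguments. Unset Strict Implicit. Unset Printing Implicit Defensive.

(* For every ordered pair (u, v) of vertices of H choose a directed path from
   u to v inside the strongly connected digraph Hh.  The union of H with these
   |V H|^2 paths lies in Hh and has pairwise distinct end-point pairs.  It is
   strongly connected: every vertex w lies on a path from some a in V H to some
   b in V H (or is itself in V H), so w reaches V H and is reached from V H,
   while any two vertices of V H are joined by one of the chosen paths. *)

Section Completions.
Variable T : finType.
Implicit Types (D H : digraph T) (P : dipath T) (Ps : seq (dipath T)).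

Lemma path_zipE (e : rel T) x p :
  path e x p = all (fun a => e a.1 a.2) (zip (x :: p) p).
Proof. by elim: p x => //= y p IH x; rewrite IH. Qed.

Lemma connect_subdigraph D1 D2 x y :
  subdigraph D1 D2 -> connect (arcrel D1) x y -> connect (arcrel D2) x y.
Proof.
case=> _ sA; apply: connect_sub => u v uv.
by apply: connect1; apply: (subsetP sA).
Qed.

Lemma dipath_graph_path P : path (arcrel (dipath_graph P)) P.1 P.2.
Proof. by rewrite path_zipE; apply/allP => -[a b] ab; rewrite /arcrel inE. Qed.

Lemma connect_through_path (e : rel T) x p w :
  path e x p -> w \in x :: p -> connect e x w /\ connect e w (last x p).
Proof.
move=> pp wp; split; first exact: path_connect pp w wp.
move: wp; rewrite inE => /predU1P [->|wp]; first by apply/connectP; exists p.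
case/splitPr: wp pp => p1 p2; rewrite cat_path last_cat /= => /and3P [_ _ pp2].
by apply/connectP; exists p2.
Qed.

Lemma connect_dipath_graph P w : w \in P.1 :: P.2 ->
  connect (arcrel (dipath_graph P)) (dipath_ends P).1 w /\
  connect (arcrel (dipath_graph P)) w (dipath_ends P).2.
Proof. exact: connect_through_path (dipath_graph_path P). Qed.

Lemma path_subset_V D x p :
  wf_digraph D -> path (arcrel D) x p -> {subset p <= V D}.
Proof.
move=> wfD; elim: p x => [|y p IH] x //= /andP [xy pp] v.
rewrite inE => /predU1P [->|]; last exact: IH pp v.
by have [] := wfD _ xy.
Qed.

Lemma subdigraph_dipath_graph D P : wf_digraph D ->
  P.1 \in V D -> path (arcrel D) P.1 P.2 -> subdigraph (dipath_graph P) D.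
Proof.
case: P => x p /= wfD xD pp; split; apply/subsetP.
  move=> v; rewrite inE => /predU1P [-> //|]; exact: path_subset_V pp v.
case=> a b; rewrite inE => ab.
by move: pp; rewrite path_zipE => /allP /(_ _ ab).
Qed.

Lemma mem_completionV H Ps w : (w \in V (completion H Ps)) =
  (w \in V H) || has (fun P => w \in P.1 :: P.2) Ps.
Proof.
elim: Ps => [|P Ps IH] /=; first by rewrite orbF.
by rewrite [V _]/= in_setU IH inE orbA orbAC.
Qed.

Lemma subdigraph_dipath_completion H Ps P :
  P \in Ps -> subdigraph (dipath_graph P) (completion H Ps).
Proof.
elim: Ps => [|Q Ps IH] //=; rewrite inE => /predU1P [->|PPs].
  by split; apply: subsetUr.
by have [sV sA] := IH PPs; split;
  [apply: subset_trans sV (subsetUl _ _)|apply: subset_trans sA (subsetUl _ _)].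
Qed.

Lemma completion_subdigraph H Ps D : subdigraph H D ->
  {in Ps, forall P, subdigraph (dipath_graph P) D} ->
  subdigraph (completion H Ps) D.
Proof.
elim: Ps => [|P Ps IH] //= sHD sPsD.
have [sVP sAP] := sPsD P (mem_head _ _).
have [sV sA] := IH sHD (fun Q QPs => sPsD Q (predU1r _ _ QPs)).
by split; apply/subUsetP.
Qed.

Lemma completion_strongly_connected H Ps :
  {in Ps, forall P, (dipath_ends P).1 \in V H /\ (dipath_ends P).2 \in V H} ->
  (forall u v, u \in V H -> v \in V H -> (u, v) \in map (@dipath_ends T) Ps) ->
  strongly_connected (completion H Ps).
Proof.
move=> endsH allPairs; set C := completion H Ps.
have throughH w : w \in V C -> exists a b, [/\ a \in V H, b \in V H,
    connect (arcrel C) a w & connect (arcrel C) w b].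
  rewrite mem_completionV => /orP [wH|/hasP [P PPs wP]]; first by exists w, w.
  have [aH bH] := endsH P PPs.
  have [aw wb] := connect_dipath_graph wP.
  have sPC := subdigraph_dipath_completion H PPs.
  by exists (dipath_ends P).1, (dipath_ends P).2;
    split; rewrite ?(connect_subdigraph sPC).
move=> u v /throughH [_ [b [_ bH _ ub]]] /throughH [a [_ [aH _ av _]]].
have /mapP [P PPs endsP] := allPairs b a bH aH.
apply: connect_trans ub (connect_trans _ av); case: endsP => -> ->.
have [_ ba] := connect_dipath_graph (mem_head P.1 P.2).
exact: connect_subdigraph (subdigraph_dipath_completion H PPs) ba.
Qed.

Lemma dipath_of_connect (e : rel T) x y : connect e x y ->
  exists P, [/\ is_dipath P, dipath_ends P = (x, y) & path e P.1 P.2].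
Proof.
case/connectP=> p pp ->; case: (shortenP pp) => q qp uq _.
by exists (x, q).
Qed.

Lemma dipaths_of_connect (e : rel T) (s : seq (T * T)) :
  {in s, forall q, connect e q.1 q.2} ->
  exists Ps, [/\ all (@is_dipath T) Ps, map (@dipath_ends T) Ps = s &
                 {in Ps, forall P, path e P.1 P.2}].
Proof.
elim: s => [|[x y] s IH] conn_s; first by exists [::].
have [Ps [dPs endsPs pathPs]] := IH (fun q qs => conn_s q (predU1r _ _ qs)).
have [P [dP endsP pathP]] := dipath_of_connect (conn_s (x, y) (mem_head _ _)).
exists (P :: Ps); split; rewrite /= ?dP ?endsP ?endsPs //.
by move=> Q; rewrite inE => /predU1P [->|/pathPs].
Qed.

End Completions.

Theorem lemma19 (T : finType) (H Hh : digraph T) :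
  wf_digraph H -> wf_digraph Hh ->
  subdigraph H Hh -> strongly_connected Hh ->
  exists Hs : digraph T, GPC H Hs /\ subdigraph Hs Hh.
Proof.
move=> _ wfHh sHHh scHh; have [sV _] := sHHh.
set s := enum (setX (V H) (V H)).
have [|Ps [dPs endsPs pathPs]] := dipaths_of_connect (e := arcrel Hh) (s := s).
  by move=> [u v]; rewrite mem_enum in_setX => /andP [uH vH];
    apply: scHh; apply: (subsetP sV).
have endsH : {in Ps, forall P, (dipath_ends P).1 \in V H /\ (dipath_ends P).2 \in V H}.
  move=> P PPs; have : dipath_ends P \in s by rewrite -endsPs map_f.
  by rewrite mem_enum in_setX => /andP [].
exists (completion H Ps); split; last first.
  apply: completion_subdigraph => // P PPs.
  apply: subdigraph_dipath_graph (pathPs P PPs) => //.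
  by apply: (subsetP sV); case: (endsH P PPs).
split; last by exists Ps; split; rewrite // endsPs enum_uniq.
apply: completion_strongly_connected => // u v uH vH.
by rewrite endsPs mem_enum in_setX uH vH.
Qed.
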